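(* Let $G=(V,E)$ be a connected graph, $s\in V$, $\mathcal{T}$ the layering tree of $G$ with respect to $s$, and $\ell\ge \ell(\mathcal{T})$ an integer. Suppose $u,v\in V$ belong to the same part $P$ of $\mathcal{T}$ at layer $k$. Then there is a $u$-$v$ path in $G$ all of whose vertices lie in $L_{\ge k}\cap L_{\le k+\ell+1}$; i.e. $u$ and $v$ are connected in $G\setminus(L_{\le k-1}\cup L_{\ge k+\ell+2})$.
   Context: For a connected graph $G$ and root $s\in V(G)$, the BFS layers are $L_i=\{v: d_G(s,v)=i\}$ for $i\ge 0$, with $L_{\le k}=L_0\cup\dots\cup L_k$, $L_{\ge k}=\bigcup_{j\ge k}L_j$, $L_{-1}=\emptyset$. For each $i\ge 0$, let $S_i^1,\dots,S_i^{s_i}$ be the connected components of $G\setminus L_{\le i-1}$ (i.e. of $G[L_{\ge i}]$), and let $P_i^j=S_i^j\cap L_i$; the nonempty sets $P_i^j$ are the parts at layer (depth) $i$, and the set $\mathcal{P}$ of all parts over all layers partitions $V(G)$. The layering tree $\mathcal{T}=(\mathcal{P},\mathcal{E})$ has the parts as vertices, with $(P,P')\in\mathcal{E}$ iff some $u\in P$, $u'\in P'$ are adjacent in $G$. Its length is $\ell(\mathcal{T})=\max_{P\in\mathcal{P}}\max_{u,v\in P} d_G(u,v)$ (distances measured in $G$). *)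

From mathcomp Require Import all_boot.
Set Implicit Arguments. Unset Strict Implicit. Unset Printing Implicit Defensive.

(* A finite simple graph: vertex type T : finType, adjacency e : rel T
   (assumed symmetric and irreflexive in the theorem). *)

Definition walkb (T : finType) (e : rel T) (x y : T) (n : nat) : bool :=
  [exists p : n.-tuple T, path e x p && (last x p == y)].

(* Graph distance d_G(x,y): least n with a walk of length n from x to y.
   (Distances in a connected graph are < #|T|; the value #|T| is returned
   only when y is unreachable, which never happens for connected graphs.) *)
Definition dist (T : finType) (e : rel T) (x y : T) : nat :=
  find (walkb e x y) (iota 0 #|T|).

Definition band_rel (T : finType) (e : rel T) (s : T) (lo hi : nat) : rel T :=
  [rel a b | [&& e a b, lo <= dist e s a <= hi & lo <= dist e s b <= hi]].

(* Adjacency of G[L_{>= i}] = G \ L_{<= i-1}. *)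
Definition above_rel (T : finType) (e : rel T) (s : T) (i : nat) : rel T :=
  [rel a b | [&& e a b, i <= dist e s a & i <= dist e s b]].

(* x and y lie in the same part P_i^j of the layering tree at layer i:
   both are in L_i and in the same connected component of G[L_{>= i}]. *)
Definition same_part (T : finType) (e : rel T) (s : T) (i : nat) (x y : T) : bool :=
  [&& dist e s x == i, dist e s y == i & connect (above_rel e s i) x y].

Definition part_of (T : finType) (e : rel T) (s x : T) : {set T} :=
  [set y | same_part e s (dist e s x) x y].

Definition layering_length (T : finType) (e : rel T) (s : T) : nat :=
  \max_(x : T) \max_(y in part_of e s x) dist e x y.

(* Descending along shortest paths to the root, any vertex of G[L_{>= i}] is joined
   to L_j (j <= i) inside the band between j and its own layer.  Hence two vertices of
   L_M, M = k + l + 1, joined in G[L_{>= M}] reach two vertices of one part at layer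
   j = M - l/2; a shortest path between those has length at most l, so it stays within
   l/2 layers of j, i.e. inside [k, M].  Finally, the u-v path in G[L_{>= k}] is pushed
   down onto L_{<= M}: every vertex beyond layer M is replaced by a vertex of L_M joined
   to it in G[L_{>= M}], and the previous observation links consecutive replacements. *)

From mathcomp Require Import all_boot zify.
Set Implicit Arguments. Unset Strict Implicit. Unset Printing Implicit Defensive.

Lemma connect_subrel (T : finType) (r r' : rel T) x y :
  subrel r r' -> connect r x y -> connect r' x y.
Proof. by move=> sub; apply: connect_sub => a b /sub; apply: connect1. Qed.

Section Walks.

Variables (T : finType) (e : rel T).

Lemma walkP x y n :
  reflect (exists p : seq T, [/\ size p = n, path e x p & last x p = y]) (walkb e x y n).
Proof.
apply: (iffP existsP) => [[p /andP[ep /eqP <-]]|[p [sz ep <-]]].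
  by exists (val p); rewrite size_tuple.
have sz' : size p == n by rewrite sz.
by exists (Tuple sz'); rewrite /= ep eqxx.
Qed.

Lemma walk0 x : walkb e x x 0.
Proof. by apply/walkP; exists [::]. Qed.

Lemma walk1 x y : e x y -> walkb e x y 1.
Proof. by move=> exy; apply/walkP; exists [:: y]; rewrite /= exy. Qed.

Lemma walk_cat x y z m n : walkb e x y m -> walkb e y z n -> walkb e x z (m + n).
Proof.
move=> /walkP[p [<- xp py]] /walkP[q [<- yq qz]]; apply/walkP.
by exists (p ++ q); rewrite size_cat cat_path last_cat py xp yq qz.
Qed.

Lemma walk_rev x y n : symmetric e -> walkb e x y n -> walkb e y x n.
Proof.
move=> e_sym /walkP[p [<- ep <-]]; apply/walkP.
exists (rev (belast x p)); rewrite size_rev size_belast rev_path; split=> //.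
  by apply: sub_path ep => a b; rewrite e_sym.
by case: p {ep} => [|z p] //=; rewrite rev_cons last_rcons.
Qed.

Lemma walk_split x p w : path e x p -> w \in x :: p ->
  exists2 i, i <= size p & walkb e x w i && walkb e w (last x p) (size p - i).
Proof.
move=> ep; rewrite inE => /predU1P[->|wp].
  by exists 0; rewrite // walk0 subn0; apply/walkP; exists p.
case/splitPr: wp ep => p1 p2; rewrite cat_path /= => /and3P[ep1 ew ep2].
exists (size p1).+1; first by rewrite size_cat /= addnS ltnS leq_addr.
rewrite size_cat /= addnS subSS addKn; apply/andP; split; apply/walkP.
  by exists (rcons p1 w); rewrite size_rcons last_rcons rcons_path ep1 ew.
by exists p2; rewrite last_cat.
Qed.

Lemma dist_leq_walk x y n : walkb e x y n -> dist e x y <= n.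
Proof.
move=> wn; rewrite /dist; have [n_lt|] := ltnP n #|T|; last first.
  by apply: leq_trans; rewrite -{2}(size_iota 0 #|T|) find_size.
rewrite leqNgt; apply/negP => lt_n.
by have := before_find 0 lt_n; rewrite nth_iota ?add0n // wn.
Qed.

Hypothesis e_conn : forall x y : T, connect e x y.

(* A shortest connecting path is duplicate-free, so its length is below #|T|. *)
Lemma walk_dist x y : walkb e x y (dist e x y).
Proof.
have [p ep ->] := connectP (e_conn x y).
case: (shortenP ep) => q xq uq _.
have q_lt : size (x :: q) <= #|T| by rewrite -(card_uniqP uq) max_card.
have has_walk : has (walkb e x (last x q)) (iota 0 #|T|).
  by apply/hasP; exists (size q); rewrite ?mem_iota //; apply/walkP; exists q.
have := nth_find 0 has_walk; rewrite nth_iota ?add0n //.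
by rewrite -{2}(size_iota 0 #|T|) -has_find.
Qed.

Lemma dist_triangle x y z : dist e x z <= dist e x y + dist e y z.
Proof. by apply: dist_leq_walk; apply: walk_cat; apply: walk_dist. Qed.

Lemma dist_adj s x y : e x y -> dist e s y <= (dist e s x).+1.
Proof.
move=> exy; rewrite -addn1; apply: leq_trans (dist_triangle s x y) _.
by rewrite leq_add2l dist_leq_walk // walk1.
Qed.

Hypothesis e_sym : symmetric e.

Lemma dist_sym x y : dist e x y = dist e y x.
Proof. by apply/eqP; rewrite eqn_leq !dist_leq_walk // walk_rev // walk_dist. Qed.

Lemma dist_pred_adj s x n : dist e s x = n.+1 -> exists2 z, dist e s z = n & e x z.
Proof.
move=> dx; have := walk_rev e_sym (walk_dist s x); rewrite dx.
case/walkP=> -[|z q] [//= [sz] /andP[exz zq] qs]; exists z => //.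
have : n.+1 <= (dist e s z).+1 by rewrite -dx dist_adj // e_sym.
rewrite ltnS => le_n; apply/eqP; rewrite eqn_leq le_n andbT dist_sym.
by apply: dist_leq_walk; apply/walkP; exists q.
Qed.

End Walks.

Section Layers.

Variables (T : finType) (e : rel T) (s : T).

Lemma band_relW lo hi lo' hi' :
  lo' <= lo -> hi <= hi' -> subrel (band_rel e s lo hi) (band_rel e s lo' hi').
Proof.
move=> le_lo le_hi a b /and3P[eab /andP[la ha] /andP[lb hb]].
by rewrite /band_rel /= eab (leq_trans le_lo la) (leq_trans le_lo lb)
  (leq_trans ha le_hi) (leq_trans hb le_hi).
Qed.

Lemma above_relW i j : j <= i -> subrel (above_rel e s i) (above_rel e s j).
Proof.
by move=> le_ji a b /and3P[eab ia ib]; rewrite /above_rel /= eab !(leq_trans le_ji).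
Qed.

Lemma band_above lo hi : subrel (band_rel e s lo hi) (above_rel e s lo).
Proof. by move=> a b /and3P[eab /andP[la _] /andP[lb _]]; apply/and3P. Qed.

Lemma connect_band_path lo hi x p :
  path e x p -> all (fun w => lo <= dist e s w <= hi) (x :: p) ->
  connect (band_rel e s lo hi) x (last x p).
Proof.
elim: p x => [|y p IHp] x /=; first by rewrite connect0.
case/andP=> exy ep /and3P[bx b_y bp].
by apply: connect_trans (connect1 _) (IHp _ ep _); rewrite /= ?b_y // /band_rel /= exy bx.
Qed.

Lemma same_part_dist x y : same_part e s (dist e s x) x y -> dist e x y <= layering_length e s.
Proof.
move=> xy; rewrite /layering_length.
apply: leq_trans (@leq_bigmax T (fun x => \max_(y in part_of e s x) dist e x y) x).
by apply: (@leq_bigmax_cond T (fun y => y \in part_of e s x) (dist e x)); rewrite inE.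
Qed.

Hypotheses (e_conn : forall x y : T, connect e x y) (e_sym : symmetric e).

Lemma band_rel_sym lo hi : symmetric (band_rel e s lo hi).
Proof. by move=> a b; rewrite /band_rel /= e_sym; congr (_ && _); apply: andbC. Qed.

Lemma above_rel_sym i : symmetric (above_rel e s i).
Proof. by move=> a b; rewrite /above_rel /= e_sym; congr (_ && _); apply: andbC. Qed.

Lemma descend_band x j : j <= dist e s x ->
  exists2 y, dist e s y = j & connect (band_rel e s j (dist e s x)) x y.
Proof.
move dx: (dist e s x) => n; elim: n x dx => [|n IHn] x dx le_jn.
  by exists x; [move: le_jn; rewrite leqn0 dx => /eqP | rewrite connect0].
have [lt_nj|le_jn'] := ltnP n j.
  by exists x; [apply/eqP; rewrite dx eqn_leq le_jn lt_nj | rewrite connect0].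
have [z dz exz] := dist_pred_adj e_conn e_sym dx.
have [y dy zy] := IHn z dz le_jn'; exists y => //.
apply: connect_trans (connect1 _) (connect_subrel (band_relW _ _) zy) => //.
by rewrite /band_rel /= exz dx dz le_jn le_jn' leqnn leqnSn.
Qed.

(* Along a shortest x-y path, the vertex at position i is within min(i, D - i) <= D/2
   layers of x and y, where D = dist x y. *)
Lemma shortest_path_band j x y : dist e s x = j -> dist e s y = j ->
  connect (band_rel e s (j - dist e x y %/ 2) (j + dist e x y %/ 2)) x y.
Proof.
move=> dx dy; have /walkP[p [sz xp py]] := walk_dist e_conn x y.
rewrite -sz -py; apply: (connect_band_path xp); apply/allP => w pw.
have [i le_ip /andP[xw wy]] := walk_split xp pw.
have := dist_leq_walk xw; have := dist_leq_walk wy; rewrite py.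
have := dist_triangle e_conn s x w; have := dist_triangle e_conn s y w.
have := dist_triangle e_conn s w x; have := dist_triangle e_conn s w y.
rewrite (dist_sym e_conn e_sym y w) (dist_sym e_conn e_sym w x) dx dy.
have := divn_eq (size p) 2; have := ltn_pmod (size p) (isT : 0 < 2).
by move: le_ip; lia.
Qed.

Lemma top_layer_band k l a b : layering_length e s <= l ->
  dist e s a = k + l + 1 -> dist e s b = k + l + 1 ->
  connect (above_rel e s (k + l + 1)) a b -> connect (band_rel e s k (k + l + 1)) a b.
Proof.
set M := k + l + 1 => hl da db ab; set j := M - l %/ 2.
have le_jM : j <= M by rewrite leq_subr.
have [a' da' aa'] : exists2 a', dist e s a' = j & connect (band_rel e s j M) a a'.
  by rewrite -da; apply: descend_band; rewrite da.
have [b' db' bb'] : exists2 b', dist e s b' = j & connect (band_rel e s j M) b b'.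
  by rewrite -db; apply: descend_band; rewrite db.
have part_ab' : same_part e s j a' b'.
  rewrite /same_part da' db' !eqxx /=.
  have a'a : connect (above_rel e s j) a' a.
    by rewrite (sym_connect_sym (above_rel_sym j)) (connect_subrel (@band_above _ _) aa').
  apply: connect_trans a'a (connect_trans (connect_subrel (above_relW le_jM) ab) _).
  exact: connect_subrel (@band_above _ _) bb'.
have D_le : dist e a' b' <= l.
  by apply: leq_trans hl; apply: same_part_dist; rewrite da'.
have sub_kM : subrel (band_rel e s j M) (band_rel e s k M).
  by apply: band_relW; rewrite // /j /M; have := leq_div l 2; lia.
have b'b : connect (band_rel e s k M) b' b.
  by rewrite (sym_connect_sym (band_rel_sym _ _)) (connect_subrel sub_kM bb').
apply: connect_trans (connect_subrel sub_kM aa') (connect_trans _ b'b).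
apply: connect_subrel (shortest_path_band da' db'); apply: band_relW;
  rewrite /j /M; have := leq_div l 2; have := leq_div2r 2 D_le; lia.
Qed.

Lemma layer_retraction M : exists g : T -> T, forall x,
  (dist e s x <= M -> g x = x) /\
  (M <= dist e s x -> dist e s (g x) = M /\ connect (above_rel e s M) x (g x)).
Proof.
pose P x y := if dist e s x <= M then y == x
              else (dist e s y == M) && connect (above_rel e s M) x y.
have exP x : exists y, P x y.
  rewrite /P; case: leqP => [|lt_Mx]; first by exists x.
  have [y dy xy] := descend_band (ltnW lt_Mx).
  by exists y; rewrite dy eqxx (connect_subrel (@band_above _ _) xy).
exists (fun x => xchoose (exP x)) => x.
move: (xchoose (exP x)) (xchooseP (exP x)) => y; rewrite /P.
case: leqP => [le_xM /eqP -> | lt_Mx /andP[/eqP dy xy]]; split=> // ge_xM.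
by split; [apply/eqP; rewrite eqn_leq le_xM | apply: connect0].
Qed.

End Layers.

Theorem mainTheorem3 (T : finType) (e : rel T)
  (e_sym : symmetric e) (e_irr : irreflexive e)
  (e_conn : forall x y : T, connect e x y)
  (s : T) (l : nat) (hl : layering_length e s <= l)
  (k : nat) (u v : T) (huv : same_part e s k u v) :
  connect (band_rel e s k (k + l + 1)) u v.
Proof.
set M := k + l + 1.
have [g gP] := layer_retraction s e_conn e_sym M.
have push_edge x y : above_rel e s k x y -> connect (band_rel e s k M) (g x) (g y).
  move=> /and3P[exy kx ky].
  have le_yx := dist_adj e_conn s exy.
  have le_xy : dist e s x <= (dist e s y).+1 by apply: dist_adj; rewrite // e_sym.
  have [[xM yM]|[Mx My]] : dist e s x <= M /\ dist e s y <= M \/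
                           M <= dist e s x /\ M <= dist e s y by lia.
    by rewrite (gP x).1 // (gP y).1 //; apply: connect1; apply/and3P; rewrite kx ky xM yM.
  have [gx xgx] := (gP x).2 Mx; have [gy ygy] := (gP y).2 My.
  apply: (top_layer_band e_conn e_sym hl gx gy).
  rewrite (sym_connect_sym (above_rel_sym s e_sym M)) in xgx.
  by apply: connect_trans xgx (connect_trans (connect1 _) ygy); apply/and3P.
have le_kM : k <= M by rewrite /M; lia.
case/and3P: huv => /eqP du /eqP dv /connectP[p up v_last].
rewrite -(gP u).1 ?du // -(gP v).1 ?dv // {}v_last.
elim: p u up {du} => [|z p IHp] x /=; first by rewrite connect0.
by case/andP=> xz zp; apply: connect_trans (push_edge _ _ xz) (IHp _ zp).
Qed.
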